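(* Each of the following lattices is 3-remote, i.e. for every lattice point $z$ with $|z|=\sqrt3$ one has $\inf_{x\in K}|z-x|\ge1$, where $K$ is the Dirichlet region of the lattice: (1) $\mathbb{Z}\subset\mathbb{R}$; (2) $\mathbb{Z}[\mathbbm{i}]\subset\mathbb{C}$; (3) $\mathbb{Z}[\frac{1+\sqrt3\mathbbm{i}}{2}]\subset\mathbb{C}$; (4) the Hurwitz integers $\mathbb{Z}\oplus\mathbb{Z}\mathbbm{i}\oplus\mathbb{Z}\mathbbm{j}\oplus\mathbb{Z}\frac{1+\mathbbm{i}+\mathbbm{j}+\mathbbm{k}}{2}\subset\mathbb{H}$; (5) $\mathbb{Z}\oplus\mathbb{Z}\mathbbm{i}\oplus\mathbb{Z}\frac{1+\sqrt3\mathbbm{j}}{2}\oplus\mathbb{Z}\frac{\mathbbm{i}+\sqrt3\mathbbm{k}}{2}\subset\mathbb{H}$; (6) the Cayley integers $\mathbb{Z}\oplus\mathbb{Z}e_1\oplus\mathbb{Z}e_2\oplus\mathbb{Z}e_3\oplus\mathbb{Z}h\oplus\mathbb{Z}e_1h\oplus\mathbb{Z}e_2h\oplus\mathbb{Z}e_3h\subset\mathbb{O}$ with $h=(e_1+e_2+e_3-e_4)/2$; (7) $\mathbb{Z}(\frac1{\sqrt2},\frac1{\sqrt2},0)\oplus\mathbb{Z}(\frac1{\sqrt2},-\frac1{\sqrt2},0)\oplus\mathbb{Z}(\frac1{\sqrt2},0,\frac1{\sqrt2})\subset\mathbb{R}^3$; (8) $\mathbb{Z}(1,0,0)\oplus\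mathbb{Z}(\frac12,\frac{\sqrt3}2,0)\oplus\mathbb{Z}(0,0,1)\subset\mathbb{R}^3$.
   Context: $\mathbb{C},\mathbb{H},\mathbb{O}$ are identified with $\mathbb{R}^2,\mathbb{R}^4,\mathbb{R}^8$ via the bases $\{1,\mathbbm{i}\}$, $\{1,\mathbbm{i},\mathbbm{j},\mathbbm{k}\}$, $\{1,e_1,\dots,e_7\}$ (with $e_i^2=-1$), with Euclidean norm $|\cdot|$; octonion products in (6) are taken with the standard multiplication conventions used for the Cayley integers (Rehm's presentation). The Dirichlet region of a lattice $\mathcal{Z}$ is $K=\{x:|x|\le|x-z|\ \forall z\in\mathcal{Z}\}$. *)

From HB Require Import structures.
From mathcomp Require Import all_boot all_order all_algebra.
From mathcomp Require Import all_classical all_reals.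
Set Implicit Arguments. Unset Strict Implicit. Unset Printing Implicit Defensive.
Import Order.TTheory GRing.Theory Num.Theory.
Local Open Scope ring_scope.
Local Open Scope classical_set_scope.

Definition enorm (R : realType) (n : nat) (x : 'rV[R]_n) : R :=
  Num.sqrt (\sum_(i < n) x ord0 i ^+ 2).

Definition vec (R : realType) (n : nat) (s : seq R) : 'rV[R]_n :=
  \row_(i < n) s`_i.

Definition latt (R : realType) (n : nat) (bs : seq 'rV[R]_n) : set 'rV[R]_n :=
  [set z | exists k : nat -> int, z = \sum_(i < size bs) (bs`_i) *~ k i].

Definition dirichlet (R : realType) (n : nat) (L : set 'rV[R]_n) : set 'rV[R]_n :=
  [set x | forall z, L z -> enorm x <= enorm (x - z)].

Definition remote3 (R : realType) (n : nat) (L : set 'rV[R]_n) : Prop :=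
  forall z, L z -> enorm z = Num.sqrt 3 ->
    1 <= inf [set enorm (z - x) | x in dirichlet L].

(* Octonions: coordinates 0..7 w.r.t. the basis 1, e_1, ..., e_7, e_i^2 = -1,
   with the (Coxeter/Rehm) multiplication triples e_i e_{i+1} = e_{i+3} (mod 7):
   (1,2,4),(2,3,5),(3,4,6),(4,5,7),(5,6,1),(6,7,2),(7,1,3). *)
Definition fano : seq (nat * nat * nat) :=
  [:: (1,2,4); (2,3,5); (3,4,6); (4,5,7); (5,6,1); (6,7,2); (7,1,3)]%N.

Definition cyc (i j k : nat) : bool :=
  ((i, j, k) \in fano) || ((j, k, i) \in fano) || ((k, i, j) \in fano).

Definition octc (i j k : nat) : int :=
  if i == 0%N then ((j == k) : nat)%:Z
  else if j == 0%N then ((i == k) : nat)%:Z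
  else if i == j then - ((k == 0%N) : nat)%:Z
  else if cyc i j k then 1
  else if cyc j i k then -1
  else 0.

Definition omul (R : realType) (x y : 'rV[R]_8) : 'rV[R]_8 :=
  \row_(k < 8) \sum_(i < 8) \sum_(j < 8) (octc i j k)%:~R * x ord0 i * y ord0 j.

Definition oe (R : realType) (i : nat) : 'rV[R]_8 := \row_(k < 8) ((k == i :> nat) : nat)%:R.

Definition oh (R : realType) : 'rV[R]_8 := 2^-1 *: (oe R 1 + oe R 2 + oe R 3 - oe R 4).

(* A point x of the Dirichlet region satisfies |x|^2 <= |x - w|^2, i.e. 2<x,w> <= |w|^2, for
   every lattice vector w. Hence if a lattice vector z of norm sqrt 3 is a sum w1 + w2 of two
   lattice vectors of norm 1, then |z - x|^2 = 3 - 2<x,w1> - 2<x,w2> + |x|^2 >= 1.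
   That every vector of norm sqrt 3 splits in this way is checked by computation: rescaling
   coordinate j by 1/tau_j makes each of the eight lattices integral, with
   |x|^2 = (sum_j w_j y_j^2) / D for integer weights w_j, so the vectors of a given norm can be
   enumerated. *)

From mathcomp Require Import all_boot all_order all_algebra.
From mathcomp Require Import all_classical all_reals.
From Stdlib Require Import ZArith.
From mathcomp Require Import ssrZ zify ring lra.
Set Implicit Arguments. Unset Strict Implicit. Unset Printing Implicit Defensive.
Import Order.TTheory GRing.Theory Num.Theory.

Section SplitsCheck.
Local Open Scope Z_scope.

(* Missing entries of y and r read as 0, so [wdist ws y [::]] is the weighted norm of y. *)
Fixpoint wdist (ws y r : seq Z) : Z :=
  if ws is w :: ws' then
    w * ((head 0 y - head 0 r) * (head 0 y - head 0 r)) + wdist ws' (behead y) (behead r)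
  else 0.

(* A short-circuiting test of [wdist ws y r == d], which keeps the exhaustive search fast. *)
Fixpoint wdist_eqb (ws y r : seq Z) (d : Z) : bool :=
  if ws is w :: ws' then
    let d' := d - w * ((head 0 y - head 0 r) * (head 0 y - head 0 r)) in
    if d' <? 0 then false else wdist_eqb ws' (behead y) (behead r) d'
  else d =? 0.

Definition zrange (r : Z) : seq Z :=
  [seq Z.of_nat i - r | i <- iota 0 (Z.to_nat (2 * r + 1))].

Fixpoint wvectors (ws : seq Z) (r : Z) : seq (seq Z) :=
  if ws is w :: ws' then
    [seq t :: y | t <- [seq t <- zrange r | w * (t * t) <=? r],
                  y <- wvectors ws' (r - w * (t * t))]
  else if r == 0 then [:: [::]] else [::].

Definition lincomb (A : seq (seq Z)) (c : seq Z) (j : nat) : Z :=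
  foldr Z.add 0 [seq nth 0 c i * nth 0 (nth [::] A i) j | i <- iota 0 (size A)].

Definition coords (n : nat) (A : seq (seq Z)) (c : seq Z) : seq Z :=
  map (lincomb A c) (iota 0 n).

Definition solve (T : seq (seq Z)) (M : Z) (y : seq Z) : seq Z :=
  [seq foldr Z.add 0 [seq t.1 * t.2 | t <- zip u y] / M | u <- T].

(* The rows of A are the basis vectors in integer coordinates. [solve T M] only guesses the
   coefficients of a vector (T / M is the inverse of the transpose of A); the guess is validated
   by recomputing its coordinates. The vectors y of weighted norm 3 D range over all integer
   vectors, lattice or not, so that no membership test is needed. *)
Definition splits_check (A T : seq (seq Z)) (M : Z) (ws : seq Z) (D : Z) : bool :=
  let roots := [seq r <- wvectors ws D | coords (size ws) A (solve T M r) == r] in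
  all (fun w => 1 <=? w) ws &&
  all (fun y => has (fun r => wdist_eqb ws y r D) roots) (wvectors ws (3 * D)).

Lemma wdist_eqbP ws y r d : wdist_eqb ws y r d -> wdist ws y r = d.
Proof.
elim: ws y r d => [|w ws IH] y r d /=; first by move=> /Z.eqb_eq.
by case: ifP => // _ /IH; lia.
Qed.

Lemma mem_zrange r t : - r <= t <= r -> t \in zrange r.
Proof.
move=> t_bounds; apply/mapP; exists (Z.to_nat (t + r)); last lia.
rewrite mem_iota; lia.
Qed.

Lemma wdist_ge0 ws y r : all (fun w => 0 <=? w) ws -> 0 <= wdist ws y r.
Proof.
elim: ws y r => [|w ws IH] y r /=; first lia.
move=> /andP[/Z.leb_le w_ge0 /(IH (behead y) (behead r)) rest_ge0].
have := Z.square_nonneg (head 0 y - head 0 r); nia.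
Qed.

Lemma wdist_wvectors ws r y : y \in wvectors ws r -> wdist ws y [::] = r.
Proof.
elim: ws r y => [|w ws IH] r y /=.
  by case: eqP => [-> | _] //; rewrite inE => /eqP ->.
by move=> /allpairsPdep[t [s [_ /IH wdist_s ->]]] /=; lia.
Qed.

Lemma mem_wvectors ws y : all (fun w => 1 <=? w) ws -> size y = size ws ->
  y \in wvectors ws (wdist ws y [::]).
Proof.
elim: ws y => [|w ws IH] [|t y] //= /andP[/Z.leb_le w_ge1 ws_ge1] [size_y].
have rest_ge0 : 0 <= wdist ws y [::].
  by apply: wdist_ge0; apply: sub_all ws_ge1 => v /Z.leb_le v_ge1; apply/Z.leb_le; lia.
have t_sq : - t <= t * t <= w * (t * t) /\ t <= t * t by nia.
rewrite /= Z.sub_0_r; apply: allpairs_f_dep.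
  by rewrite mem_filter mem_zrange ?andbT; [apply/Z.leb_le | ]; lia.
by rewrite (_ : _ - _ = wdist ws y [::]); [exact: IH | lia].
Qed.

Lemma splits_check_sound A T M ws D : splits_check A T M ws D ->
  forall y, size y = size ws -> wdist ws y [::] = 3 * D ->
  exists c, wdist ws (coords (size ws) A c) [::] = D /\ wdist ws y (coords (size ws) A c) = D.
Proof.
move=> /andP[ws_ge1 /allP split_all] y size_y wdist_y.
have := split_all y; rewrite -wdist_y => /(_ (mem_wvectors ws_ge1 size_y)) /hasP[r].
rewrite mem_filter => /andP[/eqP r_coords /wdist_wvectors wdist_r] /wdist_eqbP wdist_yr.
by exists (solve T M r); rewrite r_coords.
Qed.

End SplitsCheck.

Local Open Scope ring_scope.

Definition Zr (R : pzRingType) (z : Z) : R := (int_of_Z z)%:~R.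
Arguments Zr : simpl never.

Section ZrMorphism.
Variable R : pzRingType.

Lemma Zr0 : Zr R 0 = 0. Proof. by []. Qed.
Lemma ZrD a b : Zr R (a + b)%Z = Zr R a + Zr R b. Proof. by rewrite /Zr rmorphD intrD. Qed.
Lemma ZrB a b : Zr R (a - b)%Z = Zr R a - Zr R b. Proof. by rewrite /Zr rmorphB intrB. Qed.
Lemma ZrM a b : Zr R (a * b)%Z = Zr R a * Zr R b. Proof. by rewrite /Zr rmorphM intrM. Qed.

End ZrMorphism.

Lemma Zr_inj (R : numDomainType) : injective (@Zr R).
Proof. by move=> a b /intr_inj /(can_inj int_of_ZK). Qed.

Section DirichletRegion.
Variables (R : realType) (n : nat).
Implicit Types (x y w : 'rV[R]_n) (L : set 'rV[R]_n).

Definition sqnorm x : R := \sum_(j < n) x ord0 j ^+ 2.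
Definition dot x y : R := \sum_(j < n) x ord0 j * y ord0 j.

Lemma sqnorm_ge0 x : 0 <= sqnorm x.
Proof. by apply: sumr_ge0 => j _; rewrite sqr_ge0. Qed.

Lemma enorm_le x y : (enorm x <= enorm y) = (sqnorm x <= sqnorm y).
Proof. by rewrite ler_sqrt ?sqnorm_ge0. Qed.

Lemma sqnormB x y : sqnorm (x - y) = sqnorm x - 2 * dot x y + sqnorm y.
Proof.
rewrite /sqnorm /dot mulr_sumr -sumrB -big_split /=.
by apply: eq_bigr => j _; rewrite !mxE sqrrB mulr_natl.
Qed.

Lemma dotC x y : dot x y = dot y x.
Proof. by apply: eq_bigr => j _; rewrite mulrC. Qed.

Lemma dotDr x y w : dot x (y + w) = dot x y + dot x w.
Proof. by rewrite /dot -big_split; apply: eq_bigr => j _; rewrite mxE mulrDr. Qed.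

Lemma dirichlet_dot_le L x w : dirichlet L x -> L w -> 2 * dot x w <= sqnorm w.
Proof. by move=> Kx /Kx; rewrite enorm_le sqnormB; lra. Qed.

Lemma remote3_of_unit_sums L :
  (forall z, L z -> sqnorm z = 3 ->
     exists w1 w2, [/\ L w1, L w2, z = w1 + w2, sqnorm w1 = 1 & sqnorm w2 = 1]) ->
  remote3 L.
Proof.
move=> split_z z Lz enorm_z.
have sqnorm_z : sqnorm z = 3.
  by move: enorm_z => /(congr1 (fun t => t ^+ 2)); rewrite !sqr_sqrtr ?sqnorm_ge0.
have [w1 [w2 [Lw1 Lw2 z_eq sqnorm_w1 sqnorm_w2]]] := split_z z Lz sqnorm_z.
have K0 : dirichlet L 0.
  by move=> v _; rewrite enorm_le /sqnorm big1 ?sqnorm_ge0 // => j _; rewrite mxE expr0n.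
apply: lb_le_inf; first by exists (enorm (z - 0)), 0.
move=> _ [x Kx <-]; rewrite -[X in X <= _]sqrtr1 ler_sqrt ?sqnorm_ge0 //.
have := dirichlet_dot_le Kx Lw1; have := dirichlet_dot_le Kx Lw2; have := sqnorm_ge0 x.
by rewrite -/(sqnorm _) sqnormB sqnorm_z z_eq (dotC (w1 + w2)) dotDr; lra.
Qed.

End DirichletRegion.

Section IntegralCoordinates.
Variables (R : realType) (n : nat) (bs : seq 'rV[R]_n).
Variables (A : seq (seq Z)) (ws : seq Z) (D : Z) (tau : seq R).
Hypothesis size_A : size A = size bs.
Hypothesis size_ws : size ws = n.
Hypothesis D_gt0 : (0 < D)%Z.
Hypothesis bs_coord :
  forall i (j : 'I_n), (i < size bs)%nat -> bs`_i ord0 j = tau`_j * Zr R (nth [::] A i)`_j.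
Hypothesis tau_sq : forall j : 'I_n, tau`_j ^+ 2 * Zr R D = Zr R ws`_j.

Lemma Zr_wdist u v :
  Zr R (wdist ws u v) = \sum_(j < size ws) Zr R ws`_j * (Zr R u`_j - Zr R v`_j) ^+ 2.
Proof.
elim: ws u v => [|w ws' IH] u v /=; first by rewrite big_ord0.
rewrite big_ord_recl ZrD IH !ZrM ZrB -expr2.
by congr (_ + _); apply: eq_bigr => j _; rewrite !nth_behead.
Qed.

Lemma Zr_coords c (j : 'I_n) :
  Zr R (coords n A c)`_j = \sum_(i < size bs) Zr R c`_i * Zr R (nth [::] A i)`_j.
Proof.
rewrite /coords (nth_map 0%nat) ?size_iota // nth_iota // add0n.
rewrite /lincomb foldrE (big_morph _ (@ZrD R) (Zr0 R)) big_map.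
rewrite -[X in iota 0 X]subn0 big_mkord -size_A.
by apply: eq_bigr => i _; rewrite ZrM.
Qed.

Lemma latt_comb_coord (c : seq Z) (j : 'I_n) :
  (\sum_(i < size bs) bs`_i *~ int_of_Z c`_i) ord0 j = tau`_j * Zr R (coords n A c)`_j.
Proof.
rewrite Zr_coords summxE mulr_sumr; apply: eq_bigr => i _.
by rewrite -scaler_int mxE bs_coord // /Zr; ring.
Qed.

Lemma sqnorm_coords (x : 'rV[R]_n) u v :
  (forall j, x ord0 j = tau`_j * (Zr R u`_j - Zr R v`_j)) ->
  sqnorm x * Zr R D = Zr R (wdist ws u v).
Proof.
move=> x_coord; rewrite Zr_wdist /sqnorm mulr_suml size_ws.
by apply: eq_bigr => j _; rewrite x_coord exprMn -tau_sq; ring.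
Qed.

Lemma remote3_of_splits_check T M : splits_check A T M ws D -> remote3 (latt bs).
Proof.
move=> /splits_check_sound split_y; apply: remote3_of_unit_sums => _ [k ->].
pose c := mkseq (Z_of_int \o k) (size bs).
have -> : \sum_(i < size bs) bs`_i *~ k i = \sum_(i < size bs) bs`_i *~ int_of_Z c`_i.
  by apply: eq_bigr => i _; rewrite nth_mkseq //= Z_of_intK.
set z := \sum_(i < _) _ => sqnorm_z.
have D_neq0 : Zr R D != 0 by rewrite /Zr intr_eq0; apply/eqP; lia.
pose y := coords n A c.
have z_coord j : z ord0 j = tau`_j * (Zr R y`_j - Zr R [::]`_j).
  by rewrite latt_comb_coord nth_nil subr0.
have wdist_y : wdist ws y [::] = (3 * D)%Z.
  by apply: (@Zr_inj R); rewrite -(sqnorm_coords z_coord) sqnorm_z ZrM.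
have size_y : size y = size ws by rewrite size_map size_iota.
have [r []] := split_y y size_y wdist_y; rewrite size_ws => wdist_r wdist_yr.
pose w1 := \sum_(i < size bs) bs`_i *~ int_of_Z r`_i.
have w1_coord j : w1 ord0 j = tau`_j * (Zr R (coords n A r)`_j - Zr R [::]`_j).
  by rewrite latt_comb_coord nth_nil subr0.
exists w1, (z - w1); split.
- by exists (fun i => int_of_Z r`_i).
- exists (fun i => int_of_Z c`_i - int_of_Z r`_i).
  by rewrite -sumrB; apply: eq_bigr => i _; rewrite mulrzBr.
- by rewrite addrC subrK.
- by apply: (mulIf D_neq0); rewrite (sqnorm_coords w1_coord) wdist_r mul1r.
- apply: (mulIf D_neq0).
  rewrite (@sqnorm_coords _ y (coords n A r)) ?wdist_yr ?mul1r // => j.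
  by rewrite !mxE z_coord w1_coord nth_nil; ring.
Qed.

End IntegralCoordinates.

Ltac entry_cases :=
  case=> -[|[|[|[|[|[|[|[|?]]]]]]]] //= ?;
  by rewrite ?mxE /= /Zr ?expr_div_n ?sqr_sqrtr //; field.

Ltac coordinate_cases := move=> -[|[|[|[|[|[|[|[|?]]]]]]]] // + _; entry_cases.

Section Certificates.
Local Open Scope Z_scope.

Lemma line_splits : splits_check [:: [:: 1]] [:: [:: 1]] 1 [:: 1] 1.
Proof. by vm_compute. Qed.

Lemma gaussian_splits :
  splits_check [:: [:: 1; 0]; [:: 0; 1]] [:: [:: 1; 0]; [:: 0; 1]] 1 [:: 1; 1] 1.
Proof. by vm_compute. Qed.

Lemma eisenstein_splits :
  splits_check [:: [:: 2; 0]; [:: 1; 1]] [:: [:: 1; -1]; [:: 0; 2]] 2 [:: 1; 3] 4.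
Proof. by vm_compute. Qed.

Lemma hurwitz_splits :
  splits_check [:: [:: 2; 0; 0; 0]; [:: 0; 2; 0; 0]; [:: 0; 0; 2; 0]; [:: 1; 1; 1; 1]]
    [:: [:: 4; 0; 0; -4]; [:: 0; 4; 0; -4]; [:: 0; 0; 4; -4]; [:: 0; 0; 0; 8]] 8
    [:: 1; 1; 1; 1] 4.
Proof. by vm_compute. Qed.

Lemma eisenstein2_splits :
  splits_check [:: [:: 2; 0; 0; 0]; [:: 0; 2; 0; 0]; [:: 1; 0; 1; 0]; [:: 0; 1; 0; 1]]
    [:: [:: 2; 0; -2; 0]; [:: 0; 2; 0; -2]; [:: 0; 0; 4; 0]; [:: 0; 0; 0; 4]] 4
    [:: 1; 1; 3; 3] 4.
Proof. by vm_compute. Qed.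

Lemma cayley_splits :
  splits_check
    [:: [:: 2; 0; 0; 0; 0; 0; 0; 0]; [:: 0; 2; 0; 0; 0; 0; 0; 0]; [:: 0; 0; 2; 0; 0; 0; 0; 0];
        [:: 0; 0; 0; 2; 0; 0; 0; 0]; [:: 0; 1; 1; 1; -1; 0; 0; 0]; [:: -1; 0; 1; 0; 1; 0; 0; 1];
        [:: -1; -1; 0; 0; -1; 1; 0; 0]; [:: -1; 0; 0; 0; 0; -1; -1; -1]]
    [:: [:: 8; 0; 0; 0; 0; 8; -24; 8]; [:: 0; 8; 0; 0; 8; 16; -8; -8];
        [:: 0; 0; 8; 0; 8; 8; 8; -16]; [:: 0; 0; 0; 8; 8; 8; 0; -8];
        [:: 0; 0; 0; 0; -16; -16; 0; 16]; [:: 0; 0; 0; 0; 0; 0; -16; 16];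
        [:: 0; 0; 0; 0; 0; 16; -16; 0]; [:: 0; 0; 0; 0; 0; 0; -16; 0]] 16
    (nseq 8 1) 4.
Proof. by vm_compute. Qed.

Lemma fcc_splits :
  splits_check [:: [:: 1; 1; 0]; [:: 1; -1; 0]; [:: 1; 0; 1]]
    [:: [:: 1; 1; -1]; [:: 1; -1; -1]; [:: 0; 0; 2]] 2 [:: 1; 1; 1] 2.
Proof. by vm_compute. Qed.

Lemma eisenstein_line_splits :
  splits_check [:: [:: 2; 0; 0]; [:: 1; 1; 0]; [:: 0; 0; 2]]
    [:: [:: 2; -2; 0]; [:: 0; 4; 0]; [:: 0; 0; 2]] 4 [:: 1; 3; 1] 4.
Proof. by vm_compute. Qed.

End Certificates.

Lemma remote3_line (R : realType) : remote3 (latt [:: vec 1 [:: (1 : R)]]).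
Proof.
apply: (remote3_of_splits_check (tau := [:: 1]) _ _ _ _ _ line_splits) => //;
  [coordinate_cases | entry_cases].
Qed.

Lemma remote3_gaussian (R : realType) :
  remote3 (latt [:: vec 2 [:: (1 : R); 0]; vec 2 [:: (0 : R); 1]]).
Proof.
apply: (remote3_of_splits_check (tau := [:: 1; 1]) _ _ _ _ _ gaussian_splits) => //;
  [coordinate_cases | entry_cases].
Qed.

Lemma remote3_eisenstein (R : realType) :
  remote3 (latt [:: vec 2 [:: 1; 0]; vec 2 [:: 2^-1; Num.sqrt (3 : R) / 2]]).
Proof.
apply: (remote3_of_splits_check (tau := [:: 2^-1; Num.sqrt 3 / 2]) _ _ _ _ _
          eisenstein_splits) => //;
  [coordinate_cases | entry_cases].
Qed.

Lemma remote3_hurwitz (R : realType) :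
  remote3 (latt [:: vec 4 [:: (1 : R); 0; 0; 0]; vec 4 [:: 0; 1; 0; 0];
                    vec 4 [:: 0; 0; 1; 0]; vec 4 [:: 2^-1; 2^-1; 2^-1; 2^-1]]).
Proof.
apply: (remote3_of_splits_check (tau := nseq 4 2^-1) _ _ _ _ _ hurwitz_splits) => //;
  [coordinate_cases | entry_cases].
Qed.

Lemma remote3_eisenstein2 (R : realType) :
  remote3 (latt [:: vec 4 [:: (1 : R); 0; 0; 0]; vec 4 [:: 0; 1; 0; 0];
                    vec 4 [:: 2^-1; 0; Num.sqrt 3 / 2; 0];
                    vec 4 [:: 0; 2^-1; 0; Num.sqrt 3 / 2]]).
Proof.
apply: (remote3_of_splits_check (tau := [:: 2^-1; 2^-1; Num.sqrt 3 / 2; Num.sqrt 3 / 2])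
          _ _ _ _ _ eisenstein2_splits) => //;
  [coordinate_cases | entry_cases].
Qed.

Lemma omul_oe_oh (R : realType) p (k : 'I_8) : (p < 8)%nat ->
  omul (oe R p) (oh R) ord0 k = 2^-1 * (octc p 1 k + octc p 2 k + octc p 3 k - octc p 4 k)%:~R.
Proof.
move=> lt_p8; rewrite mxE (bigD1 (Ordinal lt_p8)) //= [X in _ + X]big1 => [|i ne_ip].
  under eq_bigr => j _ do rewrite mxE eqxx mulr1.
  by rewrite addr0 !big_ord_recr big_ord0 /= !mxE /=; ring.
apply: big1 => j _; move: ne_ip; rewrite mxE -val_eqE /= => /negbTE ->.
by rewrite mulr0 mul0r.
Qed.

Lemma remote3_cayley (R : realType) :
  remote3 (latt [:: oe R 0; oe R 1; oe R 2; oe R 3; oh R;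
                    omul (oe R 1) (oh R); omul (oe R 2) (oh R); omul (oe R 3) (oh R)]).
Proof.
apply: (remote3_of_splits_check (tau := nseq 8 2^-1) _ _ _ _ _ cayley_splits) => //;
  last by entry_cases.
move=> -[|[|[|[|[|[|[|[|?]]]]]]]] // + _; last 3 first.
  (* the structure constants [octc] are evaluated by conversion *)
  1-3: by case=> -[|[|[|[|[|[|[|[|?]]]]]]]] //= ?; rewrite omul_oe_oh.
all: entry_cases.
Qed.

Lemma remote3_fcc (R : realType) :
  remote3 (latt [:: vec 3 [:: 1 / Num.sqrt (2 : R); 1 / Num.sqrt 2; 0];
                    vec 3 [:: 1 / Num.sqrt 2; - (1 / Num.sqrt 2); 0];
                    vec 3 [:: 1 / Num.sqrt 2; 0; 1 / Num.sqrt 2]]).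
Proof.
(* discharges the side conditions of [field] in [entry_cases] *)
have sqrt2_neq0 : Num.sqrt (2 : R) != 0 by rewrite sqrtr_eq0 -ltNge.
apply: (remote3_of_splits_check (tau := nseq 3 (1 / Num.sqrt 2)) _ _ _ _ _ fcc_splits) => //;
  [coordinate_cases | entry_cases].
Qed.

Lemma remote3_eisenstein_line (R : realType) :
  remote3 (latt [:: vec 3 [:: (1 : R); 0; 0]; vec 3 [:: 2^-1; Num.sqrt 3 / 2; 0];
                    vec 3 [:: (0 : R); 0; 1]]).
Proof.
apply: (remote3_of_splits_check (tau := [:: 2^-1; Num.sqrt 3 / 2; 2^-1]) _ _ _ _ _
          eisenstein_line_splits) => //;
  [coordinate_cases | entry_cases].
Qed.

Theorem proposition2p6 (R : realType) :
  let s2 := Num.sqrt (2 : R) in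
  let s3 := Num.sqrt (3 : R) in
  (* (1) Z in R *)
  remote3 (latt [:: vec 1 [:: (1 : R)]]) /\
  (* (2) Z[i] in C = R^2 *)
  remote3 (latt [:: vec 2 [:: (1 : R); 0]; vec 2 [:: (0 : R); 1]]) /\
  (* (3) Z[(1 + sqrt3 i)/2] in C *)
  remote3 (latt [:: vec 2 [:: 1; 0]; vec 2 [:: 2^-1; s3 / 2]]) /\
  (* (4) Hurwitz integers in H = R^4 *)
  remote3 (latt [:: vec 4 [:: (1 : R); 0; 0; 0]; vec 4 [:: 0; 1; 0; 0];
                    vec 4 [:: 0; 0; 1; 0]; vec 4 [:: 2^-1; 2^-1; 2^-1; 2^-1]]) /\
  (* (5) Z + Z i + Z (1 + sqrt3 j)/2 + Z (i + sqrt3 k)/2 in H *)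
  remote3 (latt [:: vec 4 [:: (1 : R); 0; 0; 0]; vec 4 [:: 0; 1; 0; 0];
                    vec 4 [:: 2^-1; 0; s3 / 2; 0]; vec 4 [:: 0; 2^-1; 0; s3 / 2]]) /\
  (* (6) Cayley integers in O = R^8 *)
  remote3 (latt [:: oe R 0; oe R 1; oe R 2; oe R 3; oh R;
                    omul (oe R 1) (oh R); omul (oe R 2) (oh R); omul (oe R 3) (oh R)]) /\
  (* (7) in R^3 *)
  remote3 (latt [:: vec 3 [:: 1 / s2; 1 / s2; 0]; vec 3 [:: 1 / s2; - (1 / s2); 0];
                    vec 3 [:: 1 / s2; 0; 1 / s2]]) /\
  (* (8) in R^3 *)
  remote3 (latt [:: vec 3 [:: (1 : R); 0; 0]; vec 3 [:: 2^-1; s3 / 2; 0];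
                    vec 3 [:: (0 : R); 0; 1]]).
Proof.
move=> s2 s3; do !split.
- exact: remote3_line.
- exact: remote3_gaussian.
- exact: remote3_eisenstein.
- exact: remote3_hurwitz.
- exact: remote3_eisenstein2.
- exact: remote3_cayley.
- exact: remote3_fcc.
- exact: remote3_eisenstein_line.
Qed.
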